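(* Let $j_1,j_2\in\tfrac12\mathbb{N}^+$ and write $R^{(j_1,j_2)}(t)$ as a $(2j_1+1)\times(2j_1+1)$ block matrix with blocks of size $(2j_2+1)\times(2j_2+1)$. Then for $1\le a,b\le 2j_1+1$ the $(a,b)$-block is an $(a-b)$-diagonal matrix if $|a-b|\le 2j_2$, and is zero if $|a-b|\ge 2j_2+1$. Here a square matrix is called $c$-diagonal if its $(i,k)$-entry is zero whenever $k-i\ne c$.
   Context: $\mathbb{F}$ is a field of characteristic zero in which every element has a square root; $q\in\mathbb{F}$ nonzero, not a root of unity, with fixed square root $q^{1/2}$ ($q^{k/2}:=(q^{1/2})^k$); other $(\cdot)^{1/2}$ are fixed square roots in $\mathbb{F}$. $[n]_q=\frac{q^n-q^{-n}}{q-q^{-1}}$, $c(t)=t-t^{-1}$, $\tfrac12\mathbb{N}^+=\{\tfrac12,1,\tfrac32,\dots\}$, $t$ an indeterminate, $\otimes$ Kronecker product. Leg notation: for factors $\mathbb{F}^{n_1}\otimes\mathbb{F}^{n_2}\otimes\mathbb{F}^{n_3}$, $X_{12}=X\otimes I_{n_3}$, $X_{23}=I_{n_1}\otimes X$, $X_{13}=P(X\otimes I_{n_2})P$ with $P$ the flip of factors 2,3; for non-square $Y$, $Y_{12}=Y\otimes I_{n_3}$, $Y_{23}=I_{n_1}\otimes Y$. For $j\in\tfrac12\mathbb{N}^+$: $\mathcal{E}^{(j+\frac12)}$ is $(4j+2)\times(2j+2)$ with only nonzero entries $\mathcal{E}_{(a,a)}=\big(\frac{[2j+2-a]_q}{[2j+1]_q}\big)^{1/2}$,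 $\mathcal{E}_{(a+2j+1,a+1)}=\big(\frac{[a]_q}{[2j+1]_q}\big)^{1/2}$ ($1\le a\le 2j+1$); $\mathcal{F}^{(j+\frac12)}$ is $(2j+2)\times(4j+2)$ with only nonzero entries $\mathcal{F}_{(a,a)}=\frac{([2j+2-a]_q[2j+1]_q)^{1/2}}{[2j+2-a]_q+[a-1]_q}$, $\mathcal{F}_{(a+1,a+2j+1)}=\frac{([a]_q[2j+1]_q)^{1/2}}{[2j+1-a]_q+[a]_q}$ ($1\le a\le 2j+1$). $R^{(\frac12,\frac12)}(t)$ is the $4\times4$ matrix with rows $(c(qt),0,0,0),(0,c(t),c(q),0),(0,c(q),c(t),0),(0,0,0,c(qt))$; recursively $R^{(\frac12,j+\frac12)}(t)=\mathcal{F}^{(j+\frac12)}_{23}R^{(\frac12,j)}_{13}(q^{-1/2}t)R^{(\frac12,\frac12)}_{12}(q^{j}t)\mathcal{E}^{(j+\frac12)}_{23}$ (factor sizes $2,2,2j+1$) and $R^{(j_1+\frac12,j_2)}(t)=\mathcal{F}^{(j_1+\frac12)}_{12}R^{(\frac12,j_2)}_{13}(q^{-j_1}t)R^{(j_1,j_2)}_{23}(q^{1/2}t)\mathcal{E}^{(j_1+\frac12)}_{12}$ (factor sizes $2,2j_1+1,2j_2+1$). *)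

From HB Require Import structures.
From mathcomp Require Import all_boot all_order all_algebra.
From mathcomp Require Import fraction mxtens.
Set Implicit Arguments.
Unset Strict Implicit.
Unset Printing Implicit Defensive.
Import Order.TTheory GRing.Theory Num.Theory.
Local Open Scope ring_scope.

(* Kronecker product: mxtens.tensmx (A *t B), with the standard row-major
   index convention  mxtens_index (i, j) = i * p + j. *)
Notation "A *t B" := (tensmx A B) (at level 40, left associativity).

Section Leg.
Variable K : fieldType.

(* leg notation on F^{n1} (x) F^{n2} (x) F^{n3}, indices as (n1*n2)*n3 *)
Definition leg12 {n1 n2 n3 : nat} (X : 'M[K]_(n1 * n2)) : 'M[K]_(n1 * n2 * n3) :=
  X *t (1%:M : 'M[K]_n3).

Definition leg23 {n1 n2 n3 : nat} (X : 'M[K]_(n2 * n3)) : 'M[K]_(n1 * n2 * n3) :=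
  castmx (mulnA n1 n2 n3, mulnA n1 n2 n3) ((1%:M : 'M[K]_n1) *t X).

Definition legY12 {p r n3 : nat} (Y : 'M[K]_(p, r)) : 'M[K]_(p * n3, r * n3) :=
  Y *t (1%:M : 'M[K]_n3).

Definition legY23_in {n1 n2 n3 r : nat} (Y : 'M[K]_(n2 * n3, r))
  : 'M[K]_(n1 * n2 * n3, n1 * r) :=
  castmx (mulnA n1 n2 n3, erefl _) ((1%:M : 'M[K]_n1) *t Y).

Definition legY23_out {n1 n2 n3 r : nat} (Y : 'M[K]_(r, n2 * n3))
  : 'M[K]_(n1 * r, n1 * n2 * n3) :=
  castmx (erefl _, mulnA n1 n2 n3) ((1%:M : 'M[K]_n1) *t Y).

Definition flip23 (n1 n2 n3 : nat) : 'M[K]_(n1 * n2 * n3, n1 * n3 * n2) :=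
  \matrix_(i, k)
    (let: (i12, i3) := mxtens_unindex i in
     let: (i1, i2) := mxtens_unindex i12 in
     let: (k13, k2) := mxtens_unindex k in
     let: (k1, k3) := mxtens_unindex k13 in
     ((i1 == k1) && (i2 == k2) && (i3 == k3))%:R).

Definition leg13 {n1 n2 n3 : nat} (X : 'M[K]_(n1 * n3)) : 'M[K]_(n1 * n2 * n3) :=
  flip23 n1 n2 n3 *m (X *t (1%:M : 'M[K]_n2)) *m (flip23 n1 n2 n3)^T.

End Leg.

Section Rmatrix.
Variable F : fieldType.
(* q, its fixed square root qh = q^{1/2}, and the fixed square-root function sq *)
Variables (q qh : F) (sq : F -> F).

Definition qint (n : nat) : F := (q ^+ n - q ^- n) / (q - q^-1).

(* E^{(j+1/2)} with D = 2j+1 : a (2D) x (D+1) matrix; entries indexed 1-based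
   as in the paper: a = i+1 (row), b = k+1 (column). *)
Definition Emx (D : nat) : 'M[F]_(2 * D, D.+1) :=
  \matrix_(i, k)
    (let a := i.+1 in let b := k.+1 in
     if ((a == b) && (a <= D))%N then sq (qint (D.+1 - a) / qint D)
     else if ((2 <= b) && (b.-1 <= D) && (a == b.-1 + D))%N then sq (qint b.-1 / qint D)
     else 0).

(* F^{(j+1/2)} with D = 2j+1 : a (D+1) x (2D) matrix. *)
Definition Fmx (D : nat) : 'M[F]_(D.+1, 2 * D) :=
  \matrix_(i, k)
    (let a := i.+1 in let b := k.+1 in
     if ((a == b) && (a <= D))%N then
       sq (qint (D.+1 - a) * qint D) / (qint (D.+1 - a) + qint a.-1)
     else if ((2 <= a) && (a.-1 <= D) && (b == a.-1 + D))%N then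
       sq (qint a.-1 * qint D) / (qint (D - a.-1) + qint a.-1)
     else 0).

Definition K := {fraction {poly F}}.
Definition iota (x : F) : K := tofrac (x%:P).
Definition tK : K := tofrac 'X.
Definition cf (x : K) : K := x - x^-1.

Definition R0 (t : K) : 'M[K]_(2 * 2) :=
  \matrix_(i, k)
    (if (i == k) && ((i == 0%N :> nat) || (i == 3%N :> nat)) then cf (iota q * t)
     else if (i == k) then cf t
     else if ((i == 1%N :> nat) && (k == 2%N :> nat)) || ((i == 2%N :> nat) && (k == 1%N :> nat))
     then cf (iota q) else 0).

(* Rhalf m t = R^{(1/2, j)}(t) with 2j = m+1 (size 2 * (2j+1)). *)
Fixpoint Rhalf (m : nat) : K -> 'M[K]_(2 * m.+2) :=
  match m with
  | 0 => R0
  | m'.+1 => fun t =>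
      legY23_out (n1 := 2) (n2 := 2) (n3 := m'.+2) (map_mx iota (Fmx m'.+2))
      *m leg13 (n1 := 2) (n2 := 2) (n3 := m'.+2) (Rhalf m' ((iota qh)^-1 * t))
      *m leg12 (n1 := 2) (n2 := 2) (n3 := m'.+2) (R0 (iota (qh ^+ m'.+1) * t))
      *m legY23_in (n1 := 2) (n2 := 2) (n3 := m'.+2) (map_mx iota (Emx m'.+2))
  end.

(* Rfull m1 m2 t = R^{(j1, j2)}(t) with 2 j1 = m1+1, 2 j2 = m2+1. *)
Fixpoint Rfull (m1 m2 : nat) : K -> 'M[K]_(m1.+2 * m2.+2) :=
  match m1 with
  | 0 => Rhalf m2
  | m1'.+1 => fun t =>
      legY12 (n3 := m2.+2) (map_mx iota (Fmx m1'.+2))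
      *m leg13 (n1 := 2) (n2 := m1'.+2) (n3 := m2.+2)
           (Rhalf m2 ((iota (qh ^+ m1'.+1))^-1 * t))
      *m leg23 (n1 := 2) (n2 := m1'.+2) (n3 := m2.+2) (Rfull m1' m2 (iota qh * t))
      *m legY12 (n3 := m2.+2) (map_mx iota (Emx m1'.+2))
  end.

End Rmatrix.

Definition block {T : Type} {n1 n2 : nat} (M : 'M[T]_(n1 * n2)) (a b : 'I_n1)
  : 'M[T]_n2 :=
  \matrix_(i, k) M (mxtens_index (a, i)) (mxtens_index (b, k)).

Definition cdiag {R : nzRingType} {n : nat} (c : int) (M : 'M[R]_n) : Prop :=
  forall i k : 'I_n, (k%:Z - i%:Z != c) -> M i k = 0.

(* Index basis vectors from 0 and give e_a (x) e_i the weight a + i. Every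
   building block of R^(j1,j2)(t) only connects basis vectors of equal weight:
   R^(1/2,1/2) by inspection, E because it sends e_b to a combination of
   e_0 (x) e_b and e_1 (x) e_(b-1), and F likewise. This is stable under
   products, transposes, Kronecker products and the flip of two tensor
   factors, hence under the leg notation and both fusion recursions. So the
   (a,b) block can be nonzero only at entries (i,k) with a + i = b + k, that
   is k - i = a - b, and it vanishes as soon as |a - b| > 2 j2. *)
From Pilot Require Import Defs.
From mathcomp Require Import all_boot all_order all_algebra.
From mathcomp Require Import fraction mxtens.
From mathcomp Require Import zify.
Import Order.TTheory GRing.Theory Num.Theory.
Local Open Scope ring_scope.

(* Weights are functions on nat rather than on ordinals so that they are
   unaffected by castmx. *)
Definition weight_preserving {R : nzRingType} {m n : nat} (wr wc : nat -> nat)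
    (M : 'M[R]_(m, n)) :=
  forall (i : 'I_m) (j : 'I_n), wr i != wc j -> M i j = 0.

Definition tens_weight (n : nat) (w1 w2 : nat -> nat) (x : nat) : nat :=
  (w1 (x %/ n) + w2 (x %% n))%N.

Definition weight2 (n : nat) : nat -> nat := tens_weight n id id.

Definition weight3 (n2 n3 : nat) : nat -> nat := tens_weight n3 (weight2 n2) id.

Lemma tens_weightE n (w1 w2 : nat -> nat) a b :
  (b < n)%N -> tens_weight n w1 w2 (a * n + b) = (w1 a + w2 b)%N.
Proof.
move=> lt_bn; have n_gt0 : (0 < n)%N by apply: leq_ltn_trans lt_bn.
by rewrite /tens_weight divnMDl // divn_small // modnMDl modn_small // addn0.
Qed.

Lemma tens_weight_assoc n2 n3 x :
  tens_weight (n2 * n3) id (weight2 n3) x = weight3 n2 n3 x.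
Proof.
rewrite /weight3 /weight2 /tens_weight /= -modn_divl modn_dvdm ?dvdn_mull //.
by rewrite mulnC divnMA addnA.
Qed.

Section WeightPreserving.
Context {R : nzRingType}.

Lemma weight_preserving_eq {m n} {wr wc wr' wc' : nat -> nat} {M : 'M[R]_(m, n)} :
  (forall i : 'I_m, wr i = wr' i) -> (forall j : 'I_n, wc j = wc' j) ->
  weight_preserving wr wc M -> weight_preserving wr' wc' M.
Proof. by move=> eq_r eq_c wM i j; rewrite -eq_r -eq_c; apply: wM. Qed.

Lemma weight_preserving_mul {m n p} {wr wm wc : nat -> nat}
    {A : 'M[R]_(m, n)} {B : 'M[R]_(n, p)} :
  weight_preserving wr wm A -> weight_preserving wm wc B ->
  weight_preserving wr wc (A *m B).
Proof.
move=> wA wB i j neq_ij; rewrite mxE big1 // => k _.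
have [eq_ik | neq_ik] := eqVneq (wr i) (wm k); last by rewrite wA ?mul0r.
by rewrite wB ?mulr0 // -eq_ik.
Qed.

Lemma weight_preserving_tr {m n} {wr wc : nat -> nat} {A : 'M[R]_(m, n)} :
  weight_preserving wr wc A -> weight_preserving wc wr A^T.
Proof. by move=> wA i j neq_ij; rewrite mxE wA // eq_sym. Qed.

Lemma weight_preserving_cast {m n m' n'} (eq_mn : (m = m') * (n = n'))
    {wr wc : nat -> nat} {A : 'M[R]_(m, n)} :
  weight_preserving wr wc A -> weight_preserving wr wc (castmx eq_mn A).
Proof. by move=> wA i j neq_ij; rewrite castmxE wA. Qed.

Lemma weight_preserving1 {n} (w : nat -> nat) : weight_preserving w w (1%:M : 'M[R]_n).
Proof. by move=> i j; apply: contraNeq; rewrite mxE => /eqP; case: eqP => [->|]. Qed.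

Lemma weight_preserving_map {S : nzRingType} {f : R -> S} {m n} {wr wc : nat -> nat}
    {M : 'M[R]_(m, n)} :
  f 0 = 0 -> weight_preserving wr wc M -> weight_preserving wr wc (map_mx f M).
Proof. by move=> f0 wM i j neq_ij; rewrite mxE wM. Qed.

Lemma weight_preserving_tens {m n p r} {wr wc vr vc : nat -> nat}
    {A : 'M[R]_(m, n)} {B : 'M[R]_(p, r)} :
  weight_preserving wr wc A -> weight_preserving vr vc B ->
  weight_preserving (tens_weight p wr vr) (tens_weight r wc vc) (A *t B).
Proof.
move=> wA wB i j.
case: (mxtens_indexP i) => i1 i2; case: (mxtens_indexP j) => j1 j2.
rewrite tensmxE /= !tens_weightE // => neq_ij.
have [eq_ij1 | ] := eqVneq (wr i1) (wc j1); last by move/wA->; rewrite mul0r.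
by rewrite wB ?mulr0 //; apply: contraNneq neq_ij => ->; rewrite eq_ij1.
Qed.

End WeightPreserving.

Section Legs.
Context {K : fieldType}.

Lemma weight_preserving_flip23 n1 n2 n3 :
  weight_preserving (weight3 n2 n3) (weight3 n3 n2) (flip23 K n1 n2 n3).
Proof.
move=> i k; rewrite mxE /= -!val_eqE /=; apply: contraNeq.
case: (_ && _) / andP => [[/andP[/eqP e1 /eqP e2] /eqP e3] _ | _]; last by rewrite eqxx.
rewrite /weight3 /weight2 /tens_weight /= e1 e2 e3.
by rewrite -!addnA [(_ %% n3 + _)%N]addnC.
Qed.

Lemma weight_preserving_leg12 {n1 n2 n3} {X : 'M[K]_(n1 * n2)} :
  weight_preserving (weight2 n2) (weight2 n2) X ->
  weight_preserving (weight3 n2 n3) (weight3 n2 n3) (leg12 (n3 := n3) X).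
Proof. by move=> wX; apply: weight_preserving_tens wX (weight_preserving1 id). Qed.

Lemma weight_preserving_leg23 {n1 n2 n3} {X : 'M[K]_(n2 * n3)} :
  weight_preserving (weight2 n3) (weight2 n3) X ->
  weight_preserving (weight3 n2 n3) (weight3 n2 n3) (leg23 (n1 := n1) X).
Proof.
move=> wX; apply/weight_preserving_cast.
apply: weight_preserving_eq (weight_preserving_tens (weight_preserving1 id) wX);
  by move=> i; rewrite tens_weight_assoc.
Qed.

Lemma weight_preserving_leg13 {n1 n2 n3} {X : 'M[K]_(n1 * n3)} :
  weight_preserving (weight2 n3) (weight2 n3) X ->
  weight_preserving (weight3 n2 n3) (weight3 n2 n3) (leg13 (n2 := n2) X).
Proof.
move=> wX; have wflip := weight_preserving_flip23 n1 n2 n3.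
apply: weight_preserving_mul (weight_preserving_tr wflip).
apply: weight_preserving_mul wflip _.
exact: weight_preserving_tens wX (weight_preserving1 id).
Qed.

Lemma weight_preserving_legY12 {p r n3} {wr wc : nat -> nat} {Y : 'M[K]_(p, r)} :
  weight_preserving wr wc Y ->
  weight_preserving (tens_weight n3 wr id) (tens_weight n3 wc id) (legY12 (n3 := n3) Y).
Proof. by move=> wY; apply: weight_preserving_tens wY (weight_preserving1 id). Qed.

Lemma weight_preserving_legY23_out {n1 n2 n3 r} {Y : 'M[K]_(r, n2 * n3)} :
  weight_preserving id (weight2 n3) Y ->
  weight_preserving (weight2 r) (weight3 n2 n3) (legY23_out (n1 := n1) Y).
Proof.
move=> wY; apply/weight_preserving_cast.
apply: weight_preserving_eq (weight_preserving_tens (weight_preserving1 id) wY);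
  by move=> i; rewrite ?tens_weight_assoc.
Qed.

Lemma weight_preserving_legY23_in {n1 n2 n3 r} {Y : 'M[K]_(n2 * n3, r)} :
  weight_preserving (weight2 n3) id Y ->
  weight_preserving (weight3 n2 n3) (weight2 r) (legY23_in (n1 := n1) Y).
Proof.
move=> wY; apply/weight_preserving_cast.
apply: weight_preserving_eq (weight_preserving_tens (weight_preserving1 id) wY);
  by move=> i; rewrite ?tens_weight_assoc.
Qed.

End Legs.

Section Rmatrix.
Variable F : fieldType.
Variables (q qh : F) (sq : F -> F).

Lemma iota0 : Defs.iota (0 : F) = 0.
Proof. by rewrite /Defs.iota polyC0 tofrac0. Qed.

Lemma weight_preserving_Emx D : weight_preserving (weight2 D) id (Emx q sq D).
Proof.
move=> i k; rewrite mxE /=; apply: contraNeq.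
case: ifP => [/andP[/eqP[eq_ik] lt_iD] _ | _].
  by rewrite /weight2 /tens_weight /= divn_small // modn_small // eq_ik.
case: ifP => [/andP[/andP[k_gt0 le_kD] /eqP eq_i] _ | _]; last by rewrite eqxx.
have -> : (i : nat) = (1 * D + k.-1)%N by lia.
by rewrite /weight2 tens_weightE /=; lia.
Qed.

Lemma weight_preserving_Fmx D : weight_preserving id (weight2 D) (Fmx q sq D).
Proof.
move=> i k; rewrite mxE /=; apply: contraNeq.
case: ifP => [/andP[/eqP[eq_ik] lt_iD] _ | _].
  by rewrite /weight2 /tens_weight /= -eq_ik divn_small // modn_small.
case: ifP => [/andP[/andP[i_gt0 le_iD] /eqP eq_k] _ | _]; last by rewrite eqxx.
have -> : (k : nat) = (1 * D + i.-1)%N by lia.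
by rewrite /weight2 tens_weightE /=; lia.
Qed.

Lemma weight_preserving_R0 t : weight_preserving (weight2 2) (weight2 2) (R0 q t).
Proof.
move=> [i lt_i4] [k lt_k4]; rewrite mxE /=.
by case: i lt_i4 => [|[|[|[|i]]]] //; case: k lt_k4 => [|[|[|[|k]]]].
Qed.

Lemma weight_preserving_Rhalf m t :
  weight_preserving (weight2 m.+2) (weight2 m.+2) (Rhalf q qh sq m t).
Proof.
elim: m t => [|m IHm] t /=; first exact: weight_preserving_R0.
have wE := weight_preserving_map iota0 (weight_preserving_Emx m.+2).
have wF := weight_preserving_map iota0 (weight_preserving_Fmx m.+2).
apply: weight_preserving_mul (weight_preserving_legY23_in wE).
apply: weight_preserving_mul (weight_preserving_leg12 (weight_preserving_R0 _)).
apply: weight_preserving_mul (weight_preserving_leg13 (IHm _)).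
exact: weight_preserving_legY23_out wF.
Qed.

Lemma weight_preserving_Rfull m1 m2 t :
  weight_preserving (weight2 m2.+2) (weight2 m2.+2) (Rfull q qh sq m1 m2 t).
Proof.
elim: m1 t => [|m1 IHm1] t /=; first exact: weight_preserving_Rhalf.
have wE := weight_preserving_map iota0 (weight_preserving_Emx m1.+2).
have wF := weight_preserving_map iota0 (weight_preserving_Fmx m1.+2).
apply: weight_preserving_mul (weight_preserving_legY12 wE).
apply: weight_preserving_mul (weight_preserving_leg23 (IHm1 _)).
apply: weight_preserving_mul (weight_preserving_leg13 (weight_preserving_Rhalf _ _)).
exact: weight_preserving_legY12 wF.
Qed.

End Rmatrix.

Lemma block_cdiag (R : nzRingType) n1 n2 (M : 'M[R]_(n1 * n2)) (a b : 'I_n1) :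
  weight_preserving (weight2 n2) (weight2 n2) M -> cdiag (a%:Z - b%:Z) (block M a b).
Proof.
move=> wM i k neq_ik; rewrite mxE; apply: wM.
rewrite /= /weight2 !tens_weightE //; apply: contraNneq neq_ik => /= eq_ik.
by apply/eqP; lia.
Qed.

Lemma cdiag_eq0 (R : nzRingType) n (c : int) (M : 'M[R]_n) :
  n%:Z <= `|c| -> cdiag c M -> M = 0.
Proof.
move=> le_nc cM; apply/matrixP => i k; rewrite mxE cM //.
apply/eqP => eq_c; move: le_nc; rewrite -eq_c lez_nat.
by have := ltn_ord i; have := ltn_ord k; lia.
Qed.

(* The sparsity pattern only reflects weight conservation. *)
Theorem propositionA2 (F : fieldType)
  (char0 : [pchar F] =i pred0)
  (sq : F -> F) (sqP : forall x : F, sq x * sq x = x)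
  (q qh : F) (q_neq0 : q != 0)
  (q_not_root_unity : forall n : nat, (0 < n)%N -> q ^+ n != 1)
  (qhP : qh * qh = q)
  (m1 m2 : nat) (a b : 'I_(m1.+2)) :
  let B := block (n1 := m1.+2) (n2 := m2.+2) (Rfull q qh sq m1 m2 (tK F)) a b in
  (`|a%:Z - b%:Z| <= (m2.+1)%:Z -> cdiag (a%:Z - b%:Z) B) /\
  ((m2.+2)%:Z <= `|a%:Z - b%:Z| -> B = 0).
Proof.
move=> B; have B_cdiag : cdiag (a%:Z - b%:Z) B.
  exact/block_cdiag/weight_preserving_Rfull.
by split=> // le_c; apply: cdiag_eq0 le_c B_cdiag.
Qed.
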